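(* Let $\mathcal{G}_n$ be the set of binary words $w=w_1\cdots w_{2n}$ with $n$ zeros and $n$ ones, and $\mathrm{da}(w)=|\{i\in[n]: w_i\neq w_{2n+1-i}\}|$. For integers $0\le k\le n$ with $n-k$ even, $$|\{w\in\mathcal{G}_n:\mathrm{da}(w)=k\}|=\binom{n}{k}\binom{n-k}{\frac{n-k}{2}}2^k,$$ and this number is $0$ if $n-k$ is odd.
   Context: $[n]=\{1,2,\dots,n\}$. *)

From mathcomp Require Import all_boot.
Set Implicit Arguments. Unset Strict Implicit. Unset Printing Implicit Defensive.

(* Binary words of length 2n are (n.*2).-tuples of bool; positions are
   0-based: position j (0 <= j < 2n) corresponds to w_{j+1}. *)

Definition balanced (n : nat) (w : (n.*2).-tuple bool) : bool :=
  (count (fun b => b == false) w == n) && (count (fun b => b == true) w == n).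

(* da(w) = #{ i in [n] : w_i != w_{2n+1-i} }; with 0-based j = i-1 this is
   #{ j < n : nth j != nth (2n-1-j) }. *)
Definition da (n : nat) (w : (n.*2).-tuple bool) : nat :=
  #|[set j : 'I_n | nth false w j != nth false w (n.*2 - 1 - j)]|.

From mathcomp Require Import all_boot zify.
Set Implicit Arguments. Unset Strict Implicit. Unset Printing Implicit Defensive.

(* Fold a word w of length 2n at its middle into the n pairs (w_j, w_{2n+1-j}).
   Recording the set D of mixed pairs and the set G of first-half positions j
   with w_j = 1 is a bijection, da(w) = |D|, and w has |D| + 2|G \ D| ones.  So w is
   balanced with da(w) = k iff |D| = k and G \ D is an ((n-k)/2)-subset of the
   complement of D, while G inside D is arbitrary: this gives C(n,k) choices of D,
   2^k of G inside D and C(n-k,(n-k)/2) of G \ D, and none when n-k is odd. *)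

Lemma card_set_pair (T1 T2 : finType) (P : T1 -> T2 -> bool) :
  #|[set p : T1 * T2 | P p.1 p.2]| = \sum_(x : T1) #|[set y | P x y]|.
Proof.
rewrite -sum1dep_card -(pair_big_dep xpredT P (fun _ _ => 1)) /=.
by apply: eq_bigr => x _; rewrite sum1dep_card.
Qed.

Lemma card_setD_eq (T : finType) (D : {set T}) m :
  #|[set G : {set T} | #|G :\: D| == m]| = 2 ^ #|D| * 'C(#|~: D|, m).
Proof.
rewrite -card_powerset -cards_draws -cardsX.
pose f (G : {set T}) := (G :&: D, G :\: D).
have f_inj : injective f.
  by move=> G1 G2 [E1 E2]; rewrite -(setID G1 D) -(setID G2 D) E1 E2.
rewrite -(card_imset _ f_inj); apply: eq_card => -[A B].
apply/imsetP/idP => [[G] | /setXP[]].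
  rewrite inE => Gm [-> ->]; rewrite in_setX powersetE subsetIr inE Gm.
  by rewrite setDE subsetIr.
rewrite powersetE inE => AD /andP[BD Bm].
have AD0 : A :\: D = set0 by apply/eqP; rewrite setD_eq0.
have BDB : B :\: D = B by apply/setDidPl; rewrite disjoints_subset.
have BD0 : B :&: D = set0 by apply/eqP; rewrite setI_eq0 disjoints_subset.
exists (A :|: B); first by rewrite inE setDUl AD0 BDB set0U.
by rewrite /f setIUl setDUl (setIidPl AD) BD0 AD0 BDB setU0 set0U.
Qed.

Lemma eq_addn_double k m N : k <= N ->
  (k + m.*2 == N) = ~~ odd (N - k) && (m == (N - k)./2).
Proof.
move=> le_kN; apply/eqP/andP => [<- | [even_Nk /eqP ->]].
  by rewrite addKn odd_double doubleK.
by rewrite even_halfK // subnKC.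
Qed.

Lemma card_weighted_pairs (T : finType) k : k <= #|T| ->
  #|[set p : {set T} * {set T} |
     (#|p.1| + (#|p.2 :\: p.1|).*2 == #|T|) && (#|p.1| == k)]|
  = if odd (#|T| - k) then 0
    else 'C(#|T|, k) * 'C(#|T| - k, (#|T| - k)./2) * 2 ^ k.
Proof.
move=> le_kT.
set c := if odd (#|T| - k) then 0 else 2 ^ k * 'C(#|T| - k, (#|T| - k)./2).
have fibre (D : {set T}) :
    #|[set G | (#|D| + (#|G :\: D|).*2 == #|T|) && (#|D| == k)]|
    = if #|D| == k then c else 0.
  case: eqP => [Dk | _]; last by apply: eq_card0 => G; rewrite inE andbF.
  under eq_finset => G do rewrite Dk andbT eq_addn_double //.
  rewrite /c; case: ifP => _; first by apply: eq_card0 => G; rewrite inE.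
  under eq_finset => G do rewrite andTb.
  by rewrite card_setD_eq -(cardsC D) Dk addKn.
rewrite (card_set_pair
  (fun D G : {set T} => (#|D| + (#|G :\: D|).*2 == #|T|) && (#|D| == k))).
rewrite (eq_bigr _ (fun D _ => fibre D)) -big_mkcond /=.
rewrite sum_nat_cond_const card_draws /c.
by case: (odd _); rewrite ?muln0 // mulnA mulnAC.
Qed.

Section Folding.
Variable n : nat.

Definition word_sets (w : (n.*2).-tuple bool) : {set 'I_n} * {set 'I_n} :=
  ([set j : 'I_n | nth false w j != nth false w (n.*2 - 1 - j)],
   [set j : 'I_n | nth false w j]).

Definition sets_bit (p : {set 'I_n} * {set 'I_n}) (j : nat) : bool :=
  let inp A i := i \in [seq val x | x in A] in
  if j < n then inp p.2 j else inp p.2 (n.*2 - 1 - j) (+) inp p.1 (n.*2 - 1 - j).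

Definition sets_word p : (n.*2).-tuple bool := [tuple sets_bit p i | i < n.*2].

Lemma nth_sets_word p j : j < n.*2 -> nth false (sets_word p) j = sets_bit p j.
Proof. by move=> lt_j2n; rewrite -[j]/(val (Ordinal lt_j2n)) nth_mktuple. Qed.

Lemma word_setsK : cancel word_sets sets_word.
Proof.
move=> w; apply/val_inj/(@eq_from_nth _ false); rewrite !size_tuple // => j lt_j2n.
rewrite nth_sets_word // /sets_bit; case: ifP => lt_jn.
  by rewrite -[j]/(val (Ordinal lt_jn)) mem_image ?inE //; apply: val_inj.
have lt_mj : n.*2 - 1 - j < n by rewrite -addnn in lt_j2n *; lia.
rewrite -[n.*2 - 1 - j]/(val (Ordinal lt_mj)) !mem_image ?inE /=; try exact: val_inj.
have -> : n.*2 - 1 - (n.*2 - 1 - j) = j by rewrite -addnn in lt_j2n *; lia.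
by case: (nth false w _); case: (nth false w j).
Qed.

Lemma sets_wordK : cancel sets_word word_sets.
Proof.
move=> [D G]; have mem_val A (i : 'I_n) : val i \in [seq val x | x in A] = (i \in A).
  by rewrite mem_image //; apply: val_inj.
have lt_i2n (i : 'I_n) : i < n.*2 by rewrite -addnn; have := ltn_ord i; lia.
have lt_mi2n (i : 'I_n) : n.*2 - 1 - i < n.*2 by rewrite -addnn; have := ltn_ord i; lia.
congr pair; apply/setP => i; rewrite inE !nth_sets_word // /sets_bit ltn_ord mem_val //.
have -> : (n.*2 - 1 - i < n) = false by rewrite -addnn; have := ltn_ord i; lia.
have -> : n.*2 - 1 - (n.*2 - 1 - i) = i by rewrite -addnn; have := ltn_ord i; lia.
by rewrite !mem_val; case: (i \in G); case: (i \in D).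
Qed.

Lemma sum_mirror (F : nat -> nat) :
  \sum_(j < n.*2) F j = \sum_(j < n) (F j + F (n.*2 - 1 - j)).
Proof.
have le_n2n : n <= n.*2 by rewrite -addnn leq_addr.
rewrite big_split /= -!(big_mkord xpredT) (big_cat_nat (leq0n n) le_n2n) /=.
congr addn; rewrite -{1}[n]add0n big_addn big_nat_rev /=.
have -> : n.*2 - n = n by rewrite -addnn addnK.
by rewrite big_mkord; apply: eq_bigr => j _; congr F; rewrite -addnn; have := ltn_ord j; lia.
Qed.

Lemma count_word_sets (w : (n.*2).-tuple bool) :
  count id w = #|(word_sets w).1| + (#|(word_sets w).2 :\: (word_sets w).1|).*2.
Proof.
have sum_mem (A : {set 'I_n}) : \sum_(j < n) (j \in A : nat) = #|A|.
  by rewrite -sum1_card [RHS]big_mkcond; apply: eq_bigr => j _; case: (j \in A).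
rewrite -[in RHS]addnn -(sumn_count id) sumnE big_map big_tuple.
under eq_bigr => i _ do rewrite (tnth_nth false).
rewrite (sum_mirror (fun j => nth false w j)) -!sum_mem -!big_split /=.
by apply: eq_bigr => j _; rewrite !inE; case: (nth false w j); case: (nth false w _).
Qed.

Lemma balancedE (w : (n.*2).-tuple bool) : balanced w = (count id w == n).
Proof.
have := count_predC id w; rewrite size_tuple /balanced (eq_count eqb_id).
rewrite (@eq_count _ (fun b => b == false) (predC id)) => [|b]; last by case: b.
move: (count id w) (count (predC id) w) => a b; rewrite -addnn => sum_ab.
by apply/andP/eqP => [[_ /eqP] // | a_n]; rewrite a_n; split => //; apply/eqP; lia.
Qed.

End Folding.

Theorem mainTheorem7 (n k : nat) : k <= n ->
  (~~ odd (n - k) ->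
     #|[set w : (n.*2).-tuple bool | balanced w && (da w == k)]|
       = 'C(n, k) * 'C(n - k, (n - k)./2) * 2 ^ k)
  /\ (odd (n - k) ->
     #|[set w : (n.*2).-tuple bool | balanced w && (da w == k)]| = 0).
Proof.
move=> le_kn.
have word_setsB : bijective (@word_sets n) by exists (@sets_word n);
  [exact: word_setsK | exact: sets_wordK].
have -> : #|[set w : (n.*2).-tuple bool | balanced w && (da w == k)]| =
    #|[set p : {set 'I_n} * {set 'I_n} |
       (#|p.1| + (#|p.2 :\: p.1|).*2 == #|'I_n|) && (#|p.1| == k)]|.
  rewrite -(on_card_preimset (onW_bij _ word_setsB)).
  by apply: eq_card => w; rewrite !inE balancedE count_word_sets card_ord.
rewrite card_weighted_pairs card_ord //.
by split => [/negbTE -> | ->].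
Qed.
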